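(* Let $R$ be a partially ordered commutative ring. Then (1) $R$ is archimedean if and only if all finitely generated subrings of $R$ are archimedean; (2) $R$ is strongly localizable if and only if all finitely generated subrings of $R$ are strongly localizable.
   Context: Rings are commutative with unit $1$; subrings contain $1$ and carry the induced order ($S^+=S\cap R^+$). A partially ordered commutative ring is a commutative ring with a partial order $\le$ with $r\le s\Rightarrow r+t\le s+t$, whose positive cone $R^+=\{r:0\le r\}$ is closed under multiplication and contains all squares. $\mathbb{N}=\{1,2,\dots\}$. $R$ is archimedean if whenever $g,h\in R$ satisfy $kg+h\in R^+$ for all $k\in\mathbb{N}$, then $g\in R^+$. $\mathrm{Loc}(R)$ is the set of $s\in 1+R^+$ such that for all $r\in R$, $rs\in R^+$ implies $r\in R^+$. $R$ is strongly localizable if $r^2\in R^+$ for all $r\in R$ and $\mathrm{Loc}(R)=1+R^+$. *)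

From HB Require Import structures.
From mathcomp Require Import all_boot all_algebra.
Set Implicit Arguments. Unset Strict Implicit. Unset Printing Implicit Defensive.
Import GRing.Theory.
Local Open Scope ring_scope.

Record po_comring (R : comPzRingType) (le : R -> R -> Prop) : Prop := {
  po_refl : forall r, le r r;
  po_antisym : forall r s, le r s -> le s r -> r = s;
  po_trans : forall r s t, le r s -> le s t -> le r t;
  po_add : forall r s t, le r s -> le (r + t) (s + t);
  po_mul : forall r s, le 0 r -> le 0 s -> le 0 (r * s);
  po_sq : forall r, le 0 (r * r)
}.

Definition is_subring (R : comPzRingType) (S : R -> Prop) : Prop :=
  [/\ S 1, (forall x y, S x -> S y -> S (x - y)) & (forall x y, S x -> S y -> S (x * y))].

Definition subring_gen (R : comPzRingType) (gens : seq R) (x : R) : Prop :=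
  forall T : R -> Prop, is_subring T -> (forall y, y \in gens -> T y) -> T x.

(* In the following, S is a subring of R carrying the induced order:
   S^+ = S ∩ R^+, i.e. the elements r of S with le 0 r. *)

Definition archimedean_on (R : comPzRingType) (le : R -> R -> Prop) (S : R -> Prop) : Prop :=
  forall g h, S g -> S h ->
    (forall k : nat, (0 < k)%N -> le 0 (g *+ k + h)) -> le 0 g.

Definition Loc_on (R : comPzRingType) (le : R -> R -> Prop) (S : R -> Prop) (s : R) : Prop :=
  (S (s - 1) /\ le 0 (s - 1)) /\
  (forall r, S r -> le 0 (r * s) -> le 0 r).

Definition strongly_localizable_on (R : comPzRingType) (le : R -> R -> Prop) (S : R -> Prop) : Prop :=
  (forall r, S r -> le 0 (r ^+ 2)) /\
  (forall s, Loc_on le S s <-> (S (s - 1) /\ le 0 (s - 1))).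

Definition whole (R : comPzRingType) : R -> Prop := fun _ => True.

From mathcomp Require Import all_boot all_algebra.
Set Implicit Arguments.
Unset Strict Implicit.
Unset Printing Implicit Defensive.

Local Open Scope ring_scope.

(* Both properties pass to every subring carrying the induced order, and each
   defining condition mentions at most two elements of the ring, which lie in
   the subring they generate.  Hence neither direction uses the ring or order
   axioms. *)

Section LocalCharacter.

Variables (R : comPzRingType) (le : R -> R -> Prop).

Lemma mem_subring_gen (gens : seq R) (y : R) : y \in gens -> subring_gen gens y.
Proof. by move=> gens_y T _; apply. Qed.

Lemma subring_gen_pair (x y : R) :
  subring_gen [:: x; y] x /\ subring_gen [:: x; y] y.
Proof.
by split; apply: mem_subring_gen; rewrite !inE eqxx ?orbT.
Qed.

Lemma archimedean_on_sub (S T : R -> Prop) :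
  (forall x, S x -> T x) -> archimedean_on le T -> archimedean_on le S.
Proof. by move=> sST archT g h Sg Sh; apply: archT; apply: sST. Qed.

Lemma archimedean_on_local (S : R -> Prop) :
  (forall g h, S g -> S h ->
     exists2 T, T g /\ T h & archimedean_on le T) ->
  archimedean_on le S.
Proof.
move=> loc g h Sg Sh; have [T [Tg Th] archT] := loc g h Sg Sh.
exact: archT.
Qed.

Lemma Loc_on_sub (S T : R -> Prop) (s : R) :
  (forall x, S x -> T x) -> S (s - 1) -> Loc_on le T s -> Loc_on le S s.
Proof.
move=> sST Ss1 [[_ s1_ge0] locT]; split=> [|r Sr]; first by [].
exact/locT/sST.
Qed.

Lemma strongly_localizable_on_sub (S T : R -> Prop) :
  (forall x, S x -> T x) ->
  strongly_localizable_on le T -> strongly_localizable_on le S.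
Proof.
move=> sST [sqT locT]; split=> [r Sr|s]; first exact/sqT/sST.
split=> [[] //|[Ss1 s1_ge0]].
apply: (Loc_on_sub sST Ss1); apply/locT.
by split; first exact: sST.
Qed.

Lemma strongly_localizable_on_local (S : R -> Prop) :
  (forall x y, S x -> S y ->
     exists2 T, T x /\ T y & strongly_localizable_on le T) ->
  strongly_localizable_on le S.
Proof.
move=> loc; split=> [r Sr|s].
  by have [T [Tr _] [sqT _]] := loc r r Sr Sr; apply: sqT.
split=> [[] //|[Ss1 s1_ge0]]; split=> [//|r Sr].
have [T [Ts1 Tr] [_ locT]] := loc (s - 1) r Ss1 Sr.
by have [_ locTs] := proj2 (locT s) (conj Ts1 s1_ge0); apply: locTs.
Qed.

End LocalCharacter.

Theorem proposition6 (R : comPzRingType) (le : R -> R -> Prop) (HR : po_comring le) :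
  (archimedean_on le (@whole R) <->
     (forall gens : seq R, archimedean_on le (subring_gen gens))) /\
  (strongly_localizable_on le (@whole R) <->
     (forall gens : seq R, strongly_localizable_on le (subring_gen gens))).
Proof.
split; split.
- by move=> archR gens; apply: archimedean_on_sub archR.
- move=> archS; apply: archimedean_on_local => g h _ _.
  by exists (subring_gen [:: g; h]); [exact: subring_gen_pair | apply: archS].
- by move=> slR gens; apply: strongly_localizable_on_sub slR.
- move=> slS; apply: strongly_localizable_on_local => x y _ _.
  by exists (subring_gen [:: x; y]); [exact: subring_gen_pair | apply: slS].
Qed.
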